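(* Let $(a,\alpha)\neq(0,0)$. There exist $\delta_0>0$ and $c>0$ such that for all $N$, all $L\le\delta_0N$, all $\mathscr P\subseteq\{1,\dots,N-1\}$ with $\min\mathscr P<L$, and all $\phi:\{-1,\dots,N+1\}\to\mathbb R$ with $\phi(-1)=N^2a-N\alpha$, $\phi(0)=N^2a$ and $\phi(k)=0$ for $k\in\mathscr P$, one has $\mathcal H_{[-1,N+1]}(\phi)\ge c\,N^2/L$.
   Context: $\mathcal H_{[-1,N+1]}(\phi)=\sum_{k=0}^{N}\frac12(\phi_{k+1}+\phi_{k-1}-2\phi_k)^2$. *)

From Stdlib Require Import Reals ZArith.
Open Scope R_scope.

(* H_{[-1,N+1]}(phi) = sum_{k=0}^{N} 1/2 (phi(k+1) + phi(k-1) - 2 phi(k))^2.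
   phi is a function on Z; only its values on {-1,...,N+1} are used. *)
Definition H_energy (N : nat) (phi : Z -> R) : R :=
  sum_f_R0 (fun k : nat =>
     let z := Z.of_nat k in
     / 2 * (phi (z + 1)%Z + phi (z - 1)%Z - 2 * phi z) ^ 2) N.

(* Write [e_k] for the second difference of [phi] at [k] and [m] for the element
   of [P] below [L].  Summing [e_k] twice
   expresses [phi m] as its linear Taylor polynomial at [0] plus
   [sum_{k < m} (m - k) e_k], and by Cauchy-Schwarz the square of this remainder
   is at most [m^3 * 2 H].  Since [phi m = 0], the remainder is
   [-(N^2 a + m N alpha)], whose modulus is at least [(|a| + |alpha|) N m] once
   [m < delta0 N] with [delta0] small ([a <> 0]) or arbitrary ([a = 0]).
   Hence [(|a| + |alpha|)^2 N^2 <= 2 H m < 2 H L]. *)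

From Stdlib Require Import Reals ZArith Lra Lia Psatz.
Open Scope R_scope.

Lemma sum_f_R0_mono_nonneg (f : nat -> R) (m n : nat) :
  (forall k, 0 <= f k) -> (m <= n)%nat -> sum_f_R0 f m <= sum_f_R0 f n.
Proof.
intros f_ge0 le_mn; induction le_mn as [|n _ IH]; [lra|].
rewrite tech5; specialize (f_ge0 (S n)); lra.
Qed.

Lemma sum_f_R0_Cauchy_Schwarz (u v : nat -> R) (n : nat) :
  (sum_f_R0 (fun i => u i * v i) n) ^ 2
  <= sum_f_R0 (fun i => u i ^ 2) n * sum_f_R0 (fun i => v i ^ 2) n.
Proof.
assert (sq_ge0 : forall w : nat -> R, forall n, 0 <= sum_f_R0 (fun i => w i ^ 2) n).
{ intros w k; apply cond_pos_sum; intros; apply pow2_ge_0. }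
induction n as [|n IH]; [simpl; nra | rewrite !tech5].
set (A := sum_f_R0 (fun i => u i * v i) n) in *.
set (U := sum_f_R0 (fun i => u i ^ 2) n) in *.
set (V := sum_f_R0 (fun i => v i ^ 2) n) in *.
assert (HU : 0 <= U) by apply sq_ge0.
assert (HV : 0 <= V) by apply sq_ge0.
(* [2 |A u v| <= 2 sqrt(U V) |u v| <= U v^2 + V u^2] *)
assert (cross : 2 * (A * (u (S n) * v (S n)))
                <= U * v (S n) ^ 2 + V * u (S n) ^ 2).
{ set (x := u (S n)) in *; set (y := v (S n)) in *.
  assert (0 <= U * y ^ 2 + V * x ^ 2) by nra.
  assert ((2 * (A * (x * y))) ^ 2 <= (U * y ^ 2 + V * x ^ 2) ^ 2).
  { assert (0 <= (U * y ^ 2 - V * x ^ 2) ^ 2) by apply pow2_ge_0.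
    assert (A ^ 2 * (x * y) ^ 2 <= U * V * (x * y) ^ 2)
      by (apply Rmult_le_compat_r; [apply pow2_ge_0 | lra]).
    nra. }
  apply Rsqr_incr_0_var; [rewrite !Rsqr_pow2; lra | lra]. }
nra.
Qed.

Definition second_diff (phi : Z -> R) (k : Z) : R :=
  phi (k + 1)%Z + phi (k - 1)%Z - 2 * phi k.

Lemma H_energy_second_diff (N : nat) (phi : Z -> R) :
  H_energy N phi = / 2 * sum_f_R0 (fun k => second_diff phi (Z.of_nat k) ^ 2) N.
Proof. rewrite scal_sum; apply sum_eq; intros; unfold second_diff; simpl; ring. Qed.

Section DiscreteTaylor.

Variable phi : Z -> R.

Let e (i : nat) : R := second_diff phi (Z.of_nat i).

Lemma first_diff_telescope (n : nat) :
  phi (Z.of_nat n + 1)%Z - phi (Z.of_nat n)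
  = phi 0%Z - phi (-1)%Z + sum_f_R0 e n.
Proof.
induction n as [|n IH]; simpl sum_f_R0; unfold e, second_diff in *.
- simpl; lra.
- replace (Z.of_nat (S n)) with (Z.of_nat n + 1)%Z by lia.
  replace (Z.of_nat n + 1 - 1)%Z with (Z.of_nat n) by lia.
  lra.
Qed.

Lemma discrete_taylor (n : nat) :
  phi (Z.of_nat (S n))
  = phi 0%Z + INR (S n) * (phi 0%Z - phi (-1)%Z)
    + sum_f_R0 (fun i => (INR (S n) - INR i) * e i) n.
Proof.
induction n as [|n IH].
- pose proof (first_diff_telescope 0) as D; simpl in *; lra.
- pose proof (first_diff_telescope (S n)) as D.
  replace (Z.of_nat (S n) + 1)%Z with (Z.of_nat (S (S n))) in D by lia.
  assert (split_weights :
    sum_f_R0 (fun i => (INR (S (S n)) - INR i) * e i) (S n)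
    = sum_f_R0 (fun i => (INR (S n) - INR i) * e i) n + sum_f_R0 e (S n)).
  { rewrite tech5, (tech5 e).
    replace (INR (S (S n)) - INR (S n)) with 1 by (rewrite (S_INR (S n)); ring).
    enough (sum_f_R0 (fun i => (INR (S (S n)) - INR i) * e i) n
            = sum_f_R0 (fun i => (INR (S n) - INR i) * e i) n + sum_f_R0 e n) by lra.
    rewrite <- sum_plus; apply sum_eq; intros; rewrite (S_INR (S n)); ring. }
  rewrite split_weights, (S_INR (S n)); lra.
Qed.

End DiscreteTaylor.

Lemma taylor_remainder_le_energy (N n : nat) (phi : Z -> R) : (n <= N)%nat ->
  (phi (Z.of_nat (S n)) - phi 0%Z - INR (S n) * (phi 0%Z - phi (-1)%Z)) ^ 2
  <= 2 * H_energy N phi * INR (S n) ^ 3.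
Proof.
intros le_nN.
set (e := fun i => second_diff phi (Z.of_nat i)).
set (m := INR (S n)).
assert (Hm : 1 <= m) by (apply (le_INR 1); lia).
assert (weights : sum_f_R0 (fun i => (m - INR i) ^ 2) n <= m ^ 3).
{ apply (Rle_trans _ (sum_f_R0 (fun _ => m ^ 2) n)).
  - apply sum_Rle; intros i le_in.
    assert (INR i <= INR n) by (apply le_INR; lia).
    assert (0 <= INR i) by apply pos_INR.
    assert (m = INR n + 1) by apply S_INR.
    nra.
  - rewrite sum_cte; fold m; right; ring. }
assert (energy : sum_f_R0 (fun i => e i ^ 2) n <= 2 * H_energy N phi).
{ rewrite H_energy_second_diff.
  assert (sum_f_R0 (fun i => e i ^ 2) n <= sum_f_R0 (fun i => e i ^ 2) N)
    by (apply sum_f_R0_mono_nonneg; [intros; apply pow2_ge_0 | exact le_nN]).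
  unfold e in *; lra. }
assert (0 <= sum_f_R0 (fun i => e i ^ 2) n)
  by (apply cond_pos_sum; intros; apply pow2_ge_0).
assert (remainder : phi (Z.of_nat (S n)) - phi 0%Z - m * (phi 0%Z - phi (-1)%Z)
                    = sum_f_R0 (fun i => (m - INR i) * e i) n)
  by (rewrite (discrete_taylor phi n); unfold m, e; ring).
rewrite remainder.
eapply Rle_trans; [apply sum_f_R0_Cauchy_Schwarz|].
assert (0 <= sum_f_R0 (fun i => (m - INR i) ^ 2) n)
  by (apply cond_pos_sum; intros; apply pow2_ge_0).
assert (0 < m ^ 3) by (apply pow_lt; lra).
nra.
Qed.

Lemma H_energy_ge_at_zero (N n : nat) (phi : Z -> R) (B : R) :
  (n <= N)%nat -> phi (Z.of_nat (S n)) = 0 -> 0 <= B ->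
  B * INR (S n) <= Rabs (phi 0%Z + INR (S n) * (phi 0%Z - phi (-1)%Z)) ->
  B ^ 2 / (2 * INR (S n)) <= H_energy N phi.
Proof.
intros le_nN zero HB Hlow.
pose proof (taylor_remainder_le_energy N n phi le_nN) as K.
rewrite zero in K.
set (m := INR (S n)) in *.
assert (Hm : 1 <= m) by (apply (le_INR 1); lia).
replace (0 - phi 0%Z - m * (phi 0%Z - phi (-1)%Z))
  with (- (phi 0%Z + m * (phi 0%Z - phi (-1)%Z))) in K by ring.
rewrite <- (pow2_abs (- _)), Rabs_Ropp in K.
assert (Hlow2 : (B * m) ^ 2 <= Rabs (phi 0%Z + m * (phi 0%Z - phi (-1)%Z)) ^ 2)
  by (apply pow_incr; nra).
apply (Rmult_le_reg_r (2 * m ^ 3)); [nra|].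
replace (B ^ 2 / (2 * m) * (2 * m ^ 3)) with ((B * m) ^ 2) by (field; lra).
lra.
Qed.

Lemma linear_form_lower_bound (a alpha : R) : a <> 0 \/ alpha <> 0 ->
  exists delta : R, 0 < delta /\
    forall x y, 0 <= y <= delta * x ->
      (Rabs a + Rabs alpha) * y <= Rabs (x * a + y * alpha).
Proof.
intros Hne.
pose proof (Rabs_pos alpha) as Halpha.
destruct (Req_dec a 0) as [-> | Ha].
- exists 1; split; [lra|]; intros x y Hy.
  rewrite Rabs_R0, Rmult_0_r, !Rplus_0_l, Rabs_mult, (Rabs_pos_eq y) by lra; lra.
- pose proof (Rabs_pos_lt a Ha) as Hpa.
  exists (Rabs a / (2 * (Rabs a + Rabs alpha))); split.
  { apply Rdiv_lt_0_compat; lra. }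
  intros x y [Hy0 Hyx].
  (* [|x a| >= 2 (|a| + |alpha|) y] absorbs [|y alpha|] *)
  assert (big : 2 * (Rabs a + Rabs alpha) * y <= x * Rabs a).
  { apply (Rmult_le_compat_l (2 * (Rabs a + Rabs alpha))) in Hyx; [|lra].
    replace (2 * (Rabs a + Rabs alpha) * (Rabs a / (2 * (Rabs a + Rabs alpha)) * x))
      with (x * Rabs a) in Hyx by (field; lra).
    lra. }
  assert (0 <= x) by nra.
  pose proof (Rabs_triang_inv (x * a) (- (y * alpha))) as T.
  rewrite Rabs_Ropp, !Rabs_mult, (Rabs_pos_eq x), (Rabs_pos_eq y) in T
    by assumption.
  replace (x * a - - (y * alpha)) with (x * a + y * alpha) in T by ring.
  nra.
Qed.

Theorem lemma3p13 (a alpha : R) (Hne : a <> 0 \/ alpha <> 0) :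
  exists delta0 c : R, 0 < delta0 /\ 0 < c /\
    forall (N L : nat) (P : nat -> Prop) (phi : Z -> R),
      INR L <= delta0 * INR N ->
      (forall k, P k -> (1 <= k <= N - 1)%nat) ->
      (exists m, P m /\ (forall k, P k -> (m <= k)%nat) /\ (m < L)%nat) ->
      phi (-1)%Z = INR N ^ 2 * a - INR N * alpha ->
      phi 0%Z = INR N ^ 2 * a ->
      (forall k, P k -> phi (Z.of_nat k) = 0) ->
      H_energy N phi >= c * INR N ^ 2 / INR L.
Proof.
destruct (linear_form_lower_bound a alpha Hne) as [delta [Hdelta bound]].
set (kappa := Rabs a + Rabs alpha).
assert (Hkappa : 0 < kappa).
{ unfold kappa; pose proof (Rabs_pos a); pose proof (Rabs_pos alpha).
  destruct Hne as [Hz | Hz]; apply Rabs_pos_lt in Hz; lra. }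
exists delta, (kappa ^ 2 / 2); split; [exact Hdelta|]; split; [nra|].
intros N L P phi HL HP [[|n] [Pm [_ HmL]]] Hphim1 Hphi0 Hzero;
  destruct (HP _ Pm) as [Hm1 HmN]; [lia|].
set (m := INR (S n)); set (x := INR N) in *; set (l := INR L) in *.
assert (Hx : 0 <= x) by apply pos_INR.
assert (Hm : 1 <= m) by (apply (le_INR 1); lia).
assert (Hml : m + 1 <= l) by (unfold m, l; rewrite <- S_INR; apply le_INR; lia).
assert (Hlow : x * kappa * m <= Rabs (phi 0%Z + m * (phi 0%Z - phi (-1)%Z))).
{ rewrite Hphim1, Hphi0; fold x.
  replace (x ^ 2 * a + m * (x ^ 2 * a - (x ^ 2 * a - x * alpha)))
    with (x * (x * a + m * alpha)) by ring.
  rewrite Rabs_mult, (Rabs_pos_eq x) by exact Hx.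
  assert (kappa * m <= Rabs (x * a + m * alpha)) by (apply bound; lra).
  nra. }
pose proof (H_energy_ge_at_zero N n phi (x * kappa) ltac:(lia) (Hzero _ Pm)
              ltac:(nra) Hlow) as Henergy.
apply Rle_ge, (Rle_trans _ ((x * kappa) ^ 2 / (2 * m))); [|exact Henergy].
apply (Rmult_le_reg_r (2 * m * l)); [nra|].
replace (kappa ^ 2 / 2 * x ^ 2 / l * (2 * m * l)) with ((x * kappa) ^ 2 * m)
  by (field; lra).
replace ((x * kappa) ^ 2 / (2 * m) * (2 * m * l)) with ((x * kappa) ^ 2 * l)
  by (field; lra).
apply Rmult_le_compat_l; [apply pow2_ge_0 | lra].
Qed.
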